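(* Let $\mathbf x\in\mathbb F^6$ with $x_5=x_6=0$. Then for every $n\ge1$, every element of $\mathcal O_{\mathbf x}(n)$ is a linear combination of right-normed products $a_{\sigma(1)}(a_{\sigma(2)}(\cdots(a_{\sigma(n-1)}a_{\sigma(n)})\cdots))$, $\sigma\in S_n$. In particular there is a surjection of $S_n$-modules $\mathbb FS_n\to\mathcal O_{\mathbf x}(n)$.
   Context: Let $\mathbb F$ be a field of characteristic $0$. Let $\mathcal T$ be the free symmetric operad over $\mathbb F$ generated by one binary operation $(a_1,a_2)\mapsto a_1a_2$ with no symmetry; its arity-$n$ component $\mathcal T(n)$ is the vector space with basis all multilinear bracketed (nonassociative) monomials in $a_1,\dots,a_n$, with the right $S_n$-action permuting arguments. For $\mathbf x=(x_1,\dots,x_6)\in\mathbb F^6$, $\mathcal O_{\mathbf x}$ denotes the quotient of $\mathcal T$ by the operad ideal $\mathcal J_{\mathbf x}$ generated by the relation (LR): $(a_1a_2)a_3 = x_1a_1(a_2a_3)+x_2a_1(a_3a_2)+x_3a_2(a_1a_3)+x_4a_2(a_3a_1)+x_5a_3(a_1a_2)+x_6a_3(a_2a_1)$. *)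

From HB Require Import structures.
From mathcomp Require Import all_boot all_order all_algebra all_fingroup.
Set Implicit Arguments. Unset Strict Implicit. Unset Printing Implicit Defensive.
Import GRing.Theory.
Local Open Scope ring_scope.

(* Nonassociative bracketed monomials: binary trees with leaves labelled by
   variable indices (leaf [Leaf i] stands for a_i). *)
Inductive tree : Type := Leaf of nat | Node of tree & tree.

Fixpoint tree_eqb (s t : tree) : bool :=
  match s, t with
  | Leaf i, Leaf j => i == j
  | Node s1 s2, Node t1 t2 => tree_eqb s1 t1 && tree_eqb s2 t2
  | _, _ => false
  end.

Lemma tree_eqP : Equality.axiom tree_eqb.
Proof.
elim=> [i|s1 IH1 s2 IH2] [j|t1 t2] /=; try by constructor.
- by apply: (iffP eqP) => [->|[]].
- by case: (IH1 t1) => [->|H]; [case: (IH2 t2) => [->|H']; constructor; congruence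
                               | constructor; congruence].
Qed.

HB.instance Definition _ := hasDecEq.Build tree tree_eqP.

Fixpoint leaves (t : tree) : seq nat :=
  match t with Leaf i => [:: i] | Node l r => leaves l ++ leaves r end.

(* t is a multilinear monomial in a_1, ..., a_n (a basis element of T(n)) *)
Definition multilinear (n : nat) (t : tree) : bool := perm_eq (leaves t) (iota 1 n).

(* Formal linear combinations of monomials, and the vector (coefficient
   function) they represent. *)
Definition vec {F : fieldType} (s : seq (F * tree)) (t : tree) : F :=
  \sum_(p <- s) (if p.2 == t then p.1 else 0).

Inductive ctx : Type := Hole | CL of ctx & tree | CR of tree & ctx.

Fixpoint plug (C : ctx) (u : tree) : tree :=
  match C with
  | Hole => u
  | CL C' r => Node (plug C' u) r
  | CR l C' => Node l (plug C' u)
  end.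

(* The relation (LR) with arbitrary monomials u1 u2 u3 substituted for the
   arguments, inserted into a context C: these span the operad ideal J_x. *)
Definition genrel {F : fieldType} (x1 x2 x3 x4 x5 x6 : F)
    (C : ctx) (u1 u2 u3 : tree) : seq (F * tree) :=
  [:: (1, plug C (Node (Node u1 u2) u3));
      (- x1, plug C (Node u1 (Node u2 u3)));
      (- x2, plug C (Node u1 (Node u3 u2)));
      (- x3, plug C (Node u2 (Node u1 u3)));
      (- x4, plug C (Node u2 (Node u3 u1)));
      (- x5, plug C (Node u3 (Node u1 u2)));
      (- x6, plug C (Node u3 (Node u2 u1)))].

Definition idealJ {F : fieldType} (x1 x2 x3 x4 x5 x6 : F) (n : nat)
    (j : tree -> F) : Prop :=
  exists g : seq (F * (ctx * tree * tree * tree)),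
    all (fun q => multilinear n
           (plug q.2.1.1.1 (Node (Node q.2.1.1.2 q.2.1.2) q.2.2))) g /\
    forall t, j t = \sum_(q <- g)
       q.1 * vec (genrel x1 x2 x3 x4 x5 x6 q.2.1.1.1 q.2.1.1.2 q.2.1.2 q.2.2) t.

Fixpoint rnorm (s : seq nat) : tree :=
  match s with
  | [::] => Leaf 0
  | [:: i] => Leaf i
  | i :: s' => Node (Leaf i) (rnorm s')
  end.

Definition rn_perm {n : nat} (sigma : 'S_n) : tree :=
  rnorm [seq (sigma i).+1 | i <- enum 'I_n].

From HB Require Import structures.
From mathcomp Require Import all_boot all_order all_algebra all_fingroup.
From mathcomp Require Import zify ring.
Set Implicit Arguments.
Unset Strict Implicit.
Unset Printing Implicit Defensive.

Import GRing.Theory.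
Local Open Scope ring_scope.

(* Every monomial can be written as a right comb a_{i1}(a_{i2}(...(a_{ik} t)))
   with a tail t that is a leaf, or of the form a_i w, or of the form (u v) w.
   In the first case the monomial is right-normed; in the second, a_i moves into
   the comb; in the third, (LR) with x5 = x6 = 0 rewrites (u v) w modulo J_x as
   a combination of u(v w), u(w v), v(u w), v(w u), whose left factor is
   strictly smaller.  Induction on (size of the tail, size of its left factor)
   therefore ends with right-normed monomials only. *)

Fixpoint spine (p : seq nat) (t : tree) : tree :=
  if p is i :: p' then Node (Leaf i) (spine p' t) else t.

Fixpoint spine_ctx (p : seq nat) : ctx :=
  if p is i :: p' then CR (Leaf i) (spine_ctx p') else Hole.

Lemma plug_spine_ctx p u : plug (spine_ctx p) u = spine p u.
Proof. by elim: p => //= i p ->. Qed.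

Lemma leaves_spine p t : leaves (spine p t) = p ++ leaves t.
Proof. by elim: p => //= i p ->. Qed.

Lemma spine_rcons p i t : spine (rcons p i) t = spine p (Node (Leaf i) t).
Proof. by elim: p => //= a p ->. Qed.

Lemma spine_Leaf p i : spine p (Leaf i) = rnorm (rcons p i).
Proof. by elim: p => //= a p ->; case: p. Qed.

Lemma multilinear_spine_perm n p t t' : perm_eq (leaves t') (leaves t) ->
  multilinear n (spine p t) -> multilinear n (spine p t').
Proof.
by rewrite /multilinear !leaves_spine => tt'; apply: perm_trans; rewrite perm_cat2l.
Qed.

Lemma rn_perm_surj n (l : seq nat) : perm_eq l (iota 1 n) ->
  exists sigma : 'S_n, rn_perm sigma = rnorm l.
Proof.
move=> l_iota.
have size_l : size l = n by rewrite (perm_size l_iota) size_iota.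
have uniq_l : uniq l by rewrite (perm_uniq l_iota) iota_uniq.
have nth_l (i : 'I_n) : (0 < nth 0%N l i < n.+1)%N.
  have : nth 0%N l i \in iota 1 n by rewrite -(perm_mem l_iota) mem_nth ?size_l.
  by rewrite mem_iota add1n.
have lt_nth (i : 'I_n) : ((nth 0%N l i).-1 < n)%N by have := nth_l i; lia.
pose f i := Ordinal (lt_nth i).
have f_inj : injective f.
  move=> i j /(congr1 val) /= eq_ij; apply: val_inj.
  have eq_nth : nth 0%N l i = nth 0%N l j by have := nth_l i; have := nth_l j; lia.
  by apply/eqP; rewrite -(nth_uniq 0%N _ _ uniq_l) ?size_l ?ltn_ord //; apply/eqP.
exists (perm f_inj); rewrite /rn_perm -[in RHS](mkseq_nth 0%N l) size_l.
rewrite /mkseq -val_enum_ord -map_comp; congr rnorm; apply: eq_map => i /=.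
by rewrite permE /=; have := nth_l i; lia.
Qed.

(* Since left_size t < tsize t, comparing weights compares (tsize, left_size)
   lexicographically. *)
Fixpoint tsize (t : tree) : nat :=
  if t is Node l r then (tsize l + tsize r)%N else 1%N.

Definition left_size (t : tree) : nat := if t is Node l _ then tsize l else 0%N.

Definition weight (t : tree) : nat := (tsize t * tsize t + left_size t)%N.

Lemma tsize_gt0 t : (0 < tsize t)%N.
Proof. by elim: t => //= l Hl r Hr; lia. Qed.

Lemma left_size_lt t : (left_size t < tsize t)%N.
Proof. by case: t => //= l r; have := tsize_gt0 r; lia. Qed.

Lemma weight_Node_Leaf i w : (weight w < weight (Node (Leaf i) w))%N.
Proof. by rewrite /weight /=; have := left_size_lt w; nia. Qed.

Section Reduction.

Variables (F : fieldType) (x1 x2 x3 x4 x5 x6 : F) (n : nat).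

Definition monomial (u : tree) : tree -> F := fun t => if u == t then 1 else 0.

Definition rn_reducible (f : tree -> F) : Prop :=
  exists (c : 'S_n -> F) (j : tree -> F), idealJ x1 x2 x3 x4 x5 x6 n j /\
    forall t, f t = j t + \sum_(sigma : 'S_n) c sigma * monomial (rn_perm sigma) t.

Lemma idealJ0 : idealJ x1 x2 x3 x4 x5 x6 n (fun _ => 0).
Proof. by exists [::]; split => // t; rewrite big_nil. Qed.

Lemma idealJD j1 j2 :
  idealJ x1 x2 x3 x4 x5 x6 n j1 -> idealJ x1 x2 x3 x4 x5 x6 n j2 ->
  idealJ x1 x2 x3 x4 x5 x6 n (fun t => j1 t + j2 t).
Proof.
move=> [g1 [ml1 E1]] [g2 [ml2 E2]]; exists (g1 ++ g2).
by rewrite all_cat ml1 ml2; split => // t; rewrite big_cat E1 E2.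
Qed.

Lemma idealJZ a j : idealJ x1 x2 x3 x4 x5 x6 n j ->
  idealJ x1 x2 x3 x4 x5 x6 n (fun t => a * j t).
Proof.
move=> [g [ml E]]; exists [seq (a * q.1, q.2) | q <- g]; rewrite all_map.
split=> // t; rewrite big_map E mulr_sumr.
by apply: eq_bigr => q _; rewrite mulrA.
Qed.

Lemma rn_reducible_ext f g : f =1 g -> rn_reducible f -> rn_reducible g.
Proof. by move=> fg [c [j [Jj E]]]; exists c, j; split => // t; rewrite -fg. Qed.

Lemma rn_reducible0 : rn_reducible (fun _ => 0).
Proof.
exists (fun _ => 0), (fun _ => 0); split; first exact: idealJ0.
by move=> t; rewrite big1 ?addr0 // => sigma _; rewrite mul0r.
Qed.

Lemma rn_reducibleD f g :
  rn_reducible f -> rn_reducible g -> rn_reducible (fun t => f t + g t).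
Proof.
move=> [c1 [j1 [J1 E1]]] [c2 [j2 [J2 E2]]].
exists (fun s => c1 s + c2 s), (fun t => j1 t + j2 t); split; first exact: idealJD.
by move=> t; under eq_bigr do rewrite mulrDl; rewrite big_split /= E1 E2; ring.
Qed.

Lemma rn_reducibleZ a f : rn_reducible f -> rn_reducible (fun t => a * f t).
Proof.
move=> [c [j [Jj E]]]; exists (fun s => a * c s), (fun t => a * j t).
split; first exact: idealJZ.
by move=> t; under eq_bigr do rewrite -mulrA; rewrite -mulr_sumr E mulrDr.
Qed.

Lemma rn_reducible_genrel p u v w :
  multilinear n (spine p (Node (Node u v) w)) ->
  rn_reducible (vec (genrel x1 x2 x3 x4 x5 x6 (spine_ctx p) u v w)).
Proof.
move=> ml; exists (fun _ => 0), (vec (genrel x1 x2 x3 x4 x5 x6 (spine_ctx p) u v w)).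
split=> [|t]; last by rewrite big1 ?addr0 // => sigma _; rewrite mul0r.
exists [:: (1, (spine_ctx p, u, v, w))]; rewrite /= plug_spine_ctx ml.
by split=> // t; rewrite big_seq1 mul1r.
Qed.

Lemma rn_reducible_rnorm l : perm_eq l (iota 1 n) -> rn_reducible (monomial (rnorm l)).
Proof.
case/rn_perm_surj=> sigma <-.
exists (fun s => if s == sigma then 1 else 0), (fun _ => 0); split; first exact: idealJ0.
move=> t; rewrite add0r (bigD1 sigma) //= eqxx mul1r big1 ?addr0 // => s /negbTE ->.
by rewrite mul0r.
Qed.

Hypotheses (x5_0 : x5 = 0) (x6_0 : x6 = 0).

Lemma monomial_spine_LR p u v w t :
  monomial (spine p (Node (Node u v) w)) t =
    vec (genrel x1 x2 x3 x4 x5 x6 (spine_ctx p) u v w) t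
    + x1 * monomial (spine p (Node u (Node v w))) t
    + x2 * monomial (spine p (Node u (Node w v))) t
    + x3 * monomial (spine p (Node v (Node u w))) t
    + x4 * monomial (spine p (Node v (Node w u))) t.
Proof.
rewrite /vec /genrel !big_cons big_nil /= !plug_spine_ctx /monomial x5_0 x6_0.
by do 7!case: ifP => _; ring.
Qed.

Lemma rn_reducible_spine p t :
  multilinear n (spine p t) -> rn_reducible (monomial (spine p t)).
Proof.
have [k] := ubnP (weight t); elim: k => // k IH in t p *; rewrite ltnS => wt ml.
case: t wt ml => [i | [i | u v] w] wt ml.
- rewrite spine_Leaf; apply: rn_reducible_rnorm.
  by move: ml; rewrite /multilinear leaves_spine cats1.
- rewrite -spine_rcons; apply: IH; last by rewrite spine_rcons.
  exact: leq_trans (weight_Node_Leaf i w) wt.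
- have smaller t' : perm_eq (leaves t') (leaves (Node (Node u v) w)) ->
      tsize t' = tsize (Node (Node u v) w) ->
      (left_size t' < left_size (Node (Node u v) w))%N ->
      rn_reducible (monomial (spine p t')).
    move=> perm_t' size_t' left_t'; apply: (IH t' p _ (multilinear_spine_perm perm_t' ml)).
    by apply: leq_trans wt; rewrite /weight size_t' ltn_add2l.
  have perm3 a b c : perm_eq (leaves a ++ leaves b ++ leaves c)
                               (leaves u ++ leaves v ++ leaves w) ->
      perm_eq (leaves (Node a (Node b c))) (leaves (Node (Node u v) w)).
    by rewrite /= -catA.
  have := tsize_gt0 u; have := tsize_gt0 v; have := tsize_gt0 w => sw sv su.
  have [R1 R2 R3 R4] : [/\ rn_reducible (monomial (spine p (Node u (Node v w)))),
                           rn_reducible (monomial (spine p (Node u (Node w v)))),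
                           rn_reducible (monomial (spine p (Node v (Node u w)))) &
                           rn_reducible (monomial (spine p (Node v (Node w u))))].
    split; apply: smaller => /=; try lia; apply: perm3.
    + by [].
    + by rewrite perm_cat2l perm_catC.
    + by rewrite perm_catCA.
    + by rewrite catA perm_catC.
  apply: rn_reducible_ext (fun t => esym (monomial_spine_LR p u v w t)) _.
  do 4!(apply: rn_reducibleD; last exact: rn_reducibleZ).
  exact: rn_reducible_genrel.
Qed.

Lemma rn_reducible_vec s : all (fun q => multilinear n q.2) s -> rn_reducible (vec s).
Proof.
elim: s => [_ | [a u] s IH /= /andP [ml_u ml_s]].
  by apply: rn_reducible_ext _ rn_reducible0 => t; rewrite /vec big_nil.
have Ru : rn_reducible (monomial (spine [::] u)) by apply: rn_reducible_spine.
apply: rn_reducible_ext _ (rn_reducibleD (rn_reducibleZ a Ru) (IH ml_s)) => t.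
by rewrite /vec big_cons /monomial /=; case: eqP; rewrite ?mulr1 ?mulr0.
Qed.

End Reduction.

Theorem mainTheorem7 (F : fieldType) (x1 x2 x3 x4 x5 x6 : F) :
  [pchar F] =i pred0 -> x5 = 0 -> x6 = 0 ->
  forall n : nat, (0 < n)%N ->
  forall s : seq (F * tree), all (fun p => multilinear n p.2) s ->
  exists (c : 'S_n -> F) (j : tree -> F),
    idealJ x1 x2 x3 x4 x5 x6 n j /\
    forall t : tree,
      vec s t = j t + \sum_(sigma : 'S_n) c sigma * (if rn_perm sigma == t then 1 else 0).
Proof. by move=> _ x5_0 x6_0 n _ s ml_s; exact: rn_reducible_vec. Qed.
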